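(* For all $j\in\mathbb{Z}_n$ the element $c_j:=b_kb_{j-k}+b_{j-k}b_k$ is independent of $k\in\mathbb{Z}_n$ and central in $A$. Moreover, for each $r\geq 0$, the set $$\mathcal{B}_r=\{\,b_0^{i_0}b_1^{i_1}\cdots b_{n-1}^{i_{n-1}}\,c_0^{j_0}c_1^{j_1}\cdots c_{n-1}^{j_{n-1}}\ \mid\ (i_0,\dots,i_{n-1})\in\{0,1\}^n,\ (j_0,\dots,j_{n-1})\in\mathbb{N}^n,\ \textstyle\sum_s i_s+2\sum_s j_s=r\,\}$$ is a $\Bbbk$-linear basis of the degree-$r$ component $A_r$ of $A$.
   Context: $\Bbbk$ is an algebraically closed field of characteristic zero, $n\ge 2$, $A=\Bbbk_{-1}[x_0,\dots,x_{n-1}]$ is generated by degree-one $x_0,\dots,x_{n-1}$ with $x_ix_j=-x_jx_i$ ($i\ne j$). Let $\omega$ be a primitive $n$th root of unity and $b_\gamma=\frac1n\sum_{i=0}^{n-1}\omega^{i\gamma}x_i$ for $\gamma\in\mathbb{Z}_n$ (indices modulo $n$). *)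

From HB Require Import structures.
From mathcomp Require Import all_boot all_order all_algebra.
Set Implicit Arguments. Unset Strict Implicit. Unset Printing Implicit Defensive.
Import Order.TTheory GRing.Theory Num.Theory.
Local Open Scope ring_scope.

(* Model of A = k_{-1}[x_0,...,x_{n-1}]:
   an element is given by its coefficient function on exponent vectors
   a : 'I_n -> nat, where the exponent vector a stands for the ordered
   monomial x^a = x_0^{a_0} x_1^{a_1} ... x_{n-1}^{a_{n-1}}.
   The relations x_i x_j = - x_j x_i (i <> j) give
   x^d x^e = (-1)^(sum_{i > j} d_i e_j) x^(d+e). *)

Definition mono (n : nat) := {ffun 'I_n -> nat}.
Definition ser (K : fieldType) (n : nat) := mono n -> K.

Definition deg n (a : mono n) : nat := (\sum_(i < n) a i)%N.

Definition sgn_exp n (d e : mono n) : nat :=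
  (\sum_(i < n) \sum_(j < n | (j < i)%N) d i * e j)%N.

Definition ord_to_mono n m (d : {ffun 'I_n -> 'I_m}) : mono n :=
  [ffun i => nat_of_ord (d i)].

Definition mono_sub n (a d : mono n) : mono n := [ffun i => (a i - d i)%N].

Definition smul (K : fieldType) n (f g : ser K n) : ser K n := fun a =>
  \sum_(d : {ffun 'I_n -> 'I_(deg a).+1} | [forall i, (d i <= a i)%N])
     (-1) ^+ (sgn_exp (ord_to_mono d) (mono_sub a (ord_to_mono d)))
       * f (ord_to_mono d) * g (mono_sub a (ord_to_mono d)).

Definition sadd (K : fieldType) n (f g : ser K n) : ser K n := fun a => f a + g a.
Definition sone (K : fieldType) n : ser K n :=
  fun a => if a == [ffun => 0%N] then 1 else 0.
Definition spow (K : fieldType) n (f : ser K n) (k : nat) : ser K n :=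
  iter k (smul f) (@sone K n).

Definition xgen (K : fieldType) n (i : 'I_n) : ser K n :=
  fun a => if a == [ffun j => nat_of_bool (j == i)] then 1 else 0.

(* elements of A: finitely supported (equivalently degree-bounded) *)
Definition is_elt (K : fieldType) n (f : ser K n) : Prop :=
  exists N : nat, forall a : mono n, (N < deg a)%N -> f a = 0.

Definition homog (K : fieldType) n (r : nat) (f : ser K n) : Prop :=
  forall a : mono n, deg a != r -> f a = 0.

Definition bel (K : fieldType) n (w : K) (g : 'I_n) : ser K n :=
  fun a => (n%:R)^-1 * \sum_(i < n) w ^+ (i * g) * @xgen K n i a.

Definition zsub n (j k : 'I_n) : 'I_n := Ordinal (ltn_pmod ((j + n - k)%N) (leq_ltn_trans (leq0n j) (ltn_ord j))).

Definition cel (K : fieldType) n (w : K) (j k : 'I_n) : ser K n :=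
  sadd (smul (bel w k) (bel w (zsub j k))) (smul (bel w (zsub j k)) (bel w k)).

(* the element c_j (using the representative k = j, i.e. b_j b_0 + b_0 b_j;
   the theorem shows the choice of k is irrelevant) *)
Definition cj (K : fieldType) n (w : K) (j : 'I_n) : ser K n := cel w j j.

Definition oprod (K : fieldType) n (f : 'I_n -> ser K n) (e : 'I_n -> nat) : ser K n :=
  foldr (fun s acc => smul (spow (f s) (e s)) acc) (@sone K n) (enum 'I_n).

(* indices of B_r: (i, j) with i in {0,1}^n, j in N^n (bounded by r,
   which loses nothing since 2 sum j = r - sum i <= r) *)
Definition bidx n r := ({ffun 'I_n -> bool} * {ffun 'I_n -> 'I_r.+1})%type.

Definition bvalid n r (t : bidx n r) : bool :=
  ((\sum_(s < n) nat_of_bool (t.1 s)) + 2 * \sum_(s < n) nat_of_ord (t.2 s) == r)%N.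

Definition belt (K : fieldType) n (w : K) r (t : bidx n r) : ser K n :=
  smul (oprod (bel w) (fun s => nat_of_bool (t.1 s)))
       (oprod (cj w) (fun s => nat_of_ord (t.2 s))).

From HB Require Import structures.
From mathcomp Require Import all_boot all_order all_algebra.
From mathcomp Require Import boolp.
Set Implicit Arguments. Unset Strict Implicit. Unset Printing Implicit Defensive.
Import GRing.Theory.
Local Open Scope ring_scope.

(* The convolution is associative (checked on monomials, then
      extended by truncating to monomials below a fixed exponent), so the
      coefficient functions form a K-algebra; in it x_i x_j = - x_j x_i for
      i <> j and every square x_i^2 is central.
   2. Fourier transform.  Since the x_i anticommute,
      b_k b_l + b_l b_k = 2/n^2 sum_i w^(i(k+l)) x_i^2 =: C (k + l mod n),
      which depends only on k + l and is central.  Ordered products b^e C^J span a space stable under left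
      multiplication by every b_s (move b_s to its place using the
      anticommutation rule); inverting the Fourier transform, it is stable
      under every x_i, hence contains all monomials and all of A_r.
   4. Independence.  The index set of B_r is in bijection with the monomials
      of degree r, so B_r is a spanning family of dim A_r elements; its
      (square) coordinate matrix is onto, hence invertible. *)

Section Monomials.
Variable n : nat.
Implicit Types (a d e f m : mono n).

Definition mle d a := [forall i, (d i <= a i)%N].
Definition madd d e : mono n := [ffun i => (d i + e i)%N].
Definition mzero : mono n := [ffun => 0%N].

Lemma mleP d a : reflect (forall i, (d i <= a i)%N) (mle d a).
Proof. exact: forallP. Qed.

Lemma mle_trans d e a : mle d e -> mle e a -> mle d a.
Proof. by move=> /mleP h1 /mleP h2; apply/mleP => i; exact: leq_trans (h1 i) (h2 i). Qed.

Lemma mle0 a : mle mzero a.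
Proof. by apply/mleP => i; rewrite ffunE. Qed.

Lemma mle_sub a d : mle (mono_sub a d) a.
Proof. by apply/mleP => i; rewrite ffunE leq_subr. Qed.

Lemma mle_madd d e : mle d (madd d e).
Proof. by apply/mleP => i; rewrite ffunE leq_addr. Qed.

Lemma maddC d e : madd d e = madd e d.
Proof. by apply/ffunP => i; rewrite !ffunE addnC. Qed.

Lemma maddA d e f : madd d (madd e f) = madd (madd d e) f.
Proof. by apply/ffunP => i; rewrite !ffunE addnA. Qed.

Lemma madd_sub a d : mle d a -> madd d (mono_sub a d) = a.
Proof. by move=> /mleP h; apply/ffunP => i; rewrite !ffunE subnKC. Qed.

Lemma sub_madd d e : mono_sub (madd d e) d = e.
Proof. by apply/ffunP => i; rewrite !ffunE addKn. Qed.

Lemma sub_mzero a : mono_sub a mzero = a.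
Proof. by apply/ffunP => i; rewrite !ffunE subn0. Qed.

Lemma subKm a d : mle d a -> mono_sub a (mono_sub a d) = d.
Proof. by move=> /mleP h; apply/ffunP => i; rewrite !ffunE subKn. Qed.

Lemma le_deg a i : (a i <= deg a)%N.
Proof. by rewrite /deg (bigD1 i) //= leq_addr. Qed.

Lemma deg_madd d e : deg (madd d e) = (deg d + deg e)%N.
Proof. by rewrite /deg -big_split; apply: eq_bigr => i _; rewrite ffunE. Qed.

Lemma deg_eq0 a : deg a = 0%N -> a = mzero.
Proof. by move=> ha; apply/ffunP => s; rewrite ffunE; apply/eqP; rewrite -leqn0 -ha le_deg. Qed.

Lemma sgn_exp_addl d e f : sgn_exp (madd d e) f = (sgn_exp d f + sgn_exp e f)%N.
Proof.
rewrite /sgn_exp -big_split; apply: eq_bigr => i _ /=.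
by rewrite -big_split; apply: eq_bigr => j _ /=; rewrite ffunE mulnDl.
Qed.

Lemma sgn_exp_addr d e f : sgn_exp d (madd e f) = (sgn_exp d e + sgn_exp d f)%N.
Proof.
rewrite /sgn_exp -big_split; apply: eq_bigr => i _ /=.
by rewrite -big_split; apply: eq_bigr => j _ /=; rewrite ffunE mulnDr.
Qed.

Lemma sgn_exp0l e : sgn_exp mzero e = 0%N.
Proof. by rewrite /sgn_exp big1 // => i _; rewrite big1 // => j _; rewrite ffunE. Qed.

Lemma sgn_exp0r e : sgn_exp e mzero = 0%N.
Proof. by rewrite /sgn_exp big1 // => i _; rewrite big1 // => j _; rewrite ffunE muln0. Qed.

Lemma ord_to_mono_inj N : injective (@ord_to_mono n N).
Proof.
move=> d d' e; apply/ffunP => i; apply: val_inj.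
by have := congr1 (fun f : mono n => f i) e; rewrite !ffunE.
Qed.

Lemma mle_ord_to_mono N (d : {ffun 'I_n -> 'I_N}) a :
  [forall i, (d i <= a i)%N] = mle (ord_to_mono d) a.
Proof. by apply: eq_forallb => i; rewrite ffunE. Qed.

Lemma sum_divisors_single (V : zmodType) N a m (F : mono n -> V) :
  (forall i, a i <= N)%N ->
  (forall d, mle d a -> d != m -> F d = 0) ->
  \sum_(d : {ffun 'I_n -> 'I_N.+1} | [forall i, (d i <= a i)%N]) F (ord_to_mono d)
  = if mle m a then F m else 0.
Proof.
move=> hN hF; case: ifP => ma.
  pose d0 : {ffun 'I_n -> 'I_N.+1} := [ffun i => inord (m i)].
  have hd0 : ord_to_mono d0 = m.
    apply/ffunP => i; rewrite !ffunE inordK // ltnS.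
    exact: leq_trans (mleP _ _ ma i) (hN i).
  rewrite (bigD1 d0) /=; last by rewrite mle_ord_to_mono hd0.
  rewrite big1 ?addr0 ?hd0 // => d /andP [hd hne].
  apply: hF; first by rewrite -mle_ord_to_mono.
  by apply: contra hne => /eqP e; apply/eqP; apply: ord_to_mono_inj; rewrite e hd0.
rewrite big1 // => d hd; apply: hF; first by rewrite -mle_ord_to_mono.
by apply/eqP => e; move: hd; rewrite mle_ord_to_mono e ma.
Qed.

End Monomials.

Section Convolution.
Variables (K : fieldType) (n : nat).
Local Notation ser := (ser K n).
Local Notation mono := (mono n).
Implicit Types (f g h : ser) (a d m p q r : mono).

Definition delta m : ser := fun a => if a == m then 1 else 0.

Definition smul_term f g a d := (-1) ^+ sgn_exp d (mono_sub a d) * f d * g (mono_sub a d).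

Lemma smulE f g a : smul f g a =
  \sum_(d : {ffun 'I_n -> 'I_(deg a).+1} | [forall i, (d i <= a i)%N])
    smul_term f g a (ord_to_mono d).
Proof. by []. Qed.

Lemma smul_deltal m g a : smul (delta m) g a =
  if mle m a then (-1) ^+ sgn_exp m (mono_sub a m) * g (mono_sub a m) else 0.
Proof.
rewrite smulE (sum_divisors_single (m := m)); first by rewrite /smul_term /delta eqxx mulr1.
  exact: le_deg.
by move=> d _ hd; rewrite /smul_term /delta (negbTE hd) mulr0 mul0r.
Qed.

Lemma smul_deltar f m a : smul f (delta m) a =
  if mle m a then (-1) ^+ sgn_exp (mono_sub a m) m * f (mono_sub a m) else 0.
Proof.
case: ifP => ma; last first.
  rewrite smulE big1 // => d _; rewrite /smul_term /delta.
  by case: eqP => [e|]; [move: ma; rewrite -e mle_sub | rewrite mulr0].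
rewrite smulE (sum_divisors_single (m := mono_sub a m)); last 2 first.
- exact: le_deg.
- move=> d hd hne; rewrite /smul_term /delta; case: eqP => [e|]; last by rewrite !mulr0.
  by case/eqP: hne; rewrite -e subKm.
by rewrite mle_sub /smul_term /delta subKm // eqxx mulr1.
Qed.

Lemma delta_mul p q : smul (delta p) (delta q) =
  (fun a => (-1) ^+ sgn_exp p q * delta (madd p q) a).
Proof.
apply: funext => a; rewrite smul_deltal /delta.
case: ifP => pa.
  have [e|ne] := eqVneq (mono_sub a p) q; first by rewrite -e madd_sub // eqxx mulr1.
  have [e|] := eqVneq a (madd p q); last by rewrite !mulr0.
  by case/eqP: ne; rewrite e sub_madd.
have [e|] := eqVneq a (madd p q); last by rewrite !mulr0.
by move: pa; rewrite e mle_madd.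
Qed.

Lemma smul_local f f' g g' a :
  (forall d, mle d a -> f d = f' d) -> (forall d, mle d a -> g d = g' d) ->
  smul f g a = smul f' g' a.
Proof.
move=> hf hg; rewrite !smulE; apply: eq_bigr => d hd.
by rewrite /smul_term hf ?hg ?mle_sub // -mle_ord_to_mono.
Qed.

Lemma smul_scalel c f g : smul (fun x => c * f x) g = (fun a => c * smul f g a).
Proof.
apply: funext => a; rewrite !smulE mulr_sumr; apply: eq_bigr => d _.
by rewrite /smul_term !mulrA [_ * c]mulrC.
Qed.

Lemma smul_scaler c f g : smul f (fun x => c * g x) = (fun a => c * smul f g a).
Proof.
apply: funext => a; rewrite !smulE mulr_sumr; apply: eq_bigr => d _.
by rewrite /smul_term mulrA [_ * c]mulrC !mulrA.
Qed.

(* The finite combination sum_{d <= a} c_d F_d; with F = delta it is the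
   truncation of c below a, which lets associativity reduce to monomials. *)
Definition trunc_comb (c : mono -> K) (F : mono -> ser) (a : mono) : ser := fun x =>
  \sum_(d : {ffun 'I_n -> 'I_(deg a).+1} | [forall i, (d i <= a i)%N])
     c (ord_to_mono d) * F (ord_to_mono d) x.

Lemma smul_combl c F a g : smul (trunc_comb c F a) g = trunc_comb c (fun p => smul (F p) g) a.
Proof.
apply: funext => x; rewrite /trunc_comb smulE.
under eq_bigr do rewrite /smul_term mulr_sumr mulr_suml.
rewrite exchange_big; apply: eq_bigr => d _; rewrite smulE mulr_sumr.
by apply: eq_bigr => e _; rewrite /smul_term mulrCA !mulrA.
Qed.

Lemma smul_combr c F a g : smul g (trunc_comb c F a) = trunc_comb c (fun p => smul g (F p)) a.
Proof.
apply: funext => x; rewrite /trunc_comb smulE.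
under eq_bigr do rewrite /smul_term mulr_sumr.
rewrite exchange_big; apply: eq_bigr => d _; rewrite smulE mulr_sumr.
by apply: eq_bigr => e _; rewrite /smul_term mulrCA !mulrA.
Qed.

Lemma trunc_comb_delta f a m : mle m a -> trunc_comb f delta a m = f m.
Proof.
move=> ma; rewrite /trunc_comb (sum_divisors_single (m := m) (F := fun y => f y * delta y m)).
- by rewrite ma /delta eqxx mulr1.
- exact: le_deg.
- by move=> d _ hd; rewrite /delta eq_sym (negbTE hd) mulr0.
Qed.

Lemma trunc_comb_ext c F F' a : (forall p, F p = F' p) -> trunc_comb c F a = trunc_comb c F' a.
Proof. by move=> h; rewrite (funext h). Qed.

(* Associativity on monomials: both sides carry the sign exponent
   sgn_exp p q + sgn_exp p r + sgn_exp q r, by biadditivity. *)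
Lemma smulA_delta p q r :
  smul (smul (delta p) (delta q)) (delta r) = smul (delta p) (smul (delta q) (delta r)).
Proof.
rewrite !delta_mul (smul_scalel _ (delta (madd p q))) (smul_scaler _ _ (delta (madd q r))).
rewrite !delta_mul; apply: funext => a; rewrite !mulrA -!exprD.
by rewrite maddA sgn_exp_addl sgn_exp_addr addnA [in RHS]addnC.
Qed.

(* Associativity: below a fixed exponent a, replace each factor by its
   truncation and expand, reducing to smulA_delta. *)
Lemma smulA f g h : smul (smul f g) h =1 smul f (smul g h).
Proof.
move=> a; pose tr k := trunc_comb k delta a.
have trE k d : mle d a -> k d = tr k d by move=> hd; rewrite /tr trunc_comb_delta.
have trE2 k l d : mle d a -> smul k l d = smul (tr k) (tr l) d.
  by move=> hd; apply: smul_local => e he; apply: trE; exact: mle_trans he hd.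
rewrite (smul_local (trE2 f g) (trE h)).
rewrite (smul_local (trE f) (trE2 g h)).
rewrite /tr !smul_combl; congr (_ a); apply: trunc_comb_ext => p.
rewrite [smul (delta p) _]smul_combr smul_combl smul_combr.
apply: trunc_comb_ext => q.
rewrite !smul_combr; apply: trunc_comb_ext => r.
exact: smulA_delta.
Qed.

End Convolution.
Arguments delta {K n}.

Definition skewpoly (K : fieldType) (n : nat) := ser K n.
HB.instance Definition _ (K : fieldType) (n : nat) :=
  Choice.copy (skewpoly K n) (mono n -> K).

Section AlgebraStructure.
Variables (K : fieldType) (n : nat).
Local Notation A := (skewpoly K n).

Definition szero : A := fun _ => 0.
Definition sopp (f : A) : A := fun x => - f x.

Lemma saddA : associative (@sadd K n).
Proof. by move=> f g h; apply: funext => x; rewrite /sadd addrA. Qed.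
Lemma saddC : commutative (@sadd K n).
Proof. by move=> f g; apply: funext => x; rewrite /sadd addrC. Qed.
Lemma sadd0 : left_id szero (@sadd K n).
Proof. by move=> f; apply: funext => x; rewrite /sadd add0r. Qed.
Lemma saddN : left_inverse szero sopp (@sadd K n).
Proof. by move=> f; apply: funext => x; rewrite /sadd addNr. Qed.

HB.instance Definition _ := GRing.isZmodule.Build A saddA saddC sadd0 saddN.

Lemma evD (f g : A) a : (f + g) a = f a + g a. Proof. by []. Qed.

Lemma smulA_fun : associative (@smul K n).
Proof. by move=> f g h; apply: funext => x; rewrite smulA. Qed.

Lemma sone_delta : @sone K n = delta (mzero n).
Proof. by []. Qed.

Lemma smul1 : left_id (@sone K n) (@smul K n).
Proof.
move=> f; apply: funext => x.
by rewrite sone_delta smul_deltal mle0 sgn_exp0l sub_mzero mul1r.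
Qed.

Lemma smulr1 : right_id (@sone K n) (@smul K n).
Proof.
move=> f; apply: funext => x.
by rewrite sone_delta smul_deltar mle0 sgn_exp0r sub_mzero mul1r.
Qed.

Lemma smulDl : left_distributive (@smul K n : A -> A -> A) +%R.
Proof.
move=> f g h; apply: funext => x; rewrite evD !smulE -big_split; apply: eq_bigr => d _.
by rewrite /smul_term evD mulrDr mulrDl.
Qed.

Lemma smulDr : right_distributive (@smul K n : A -> A -> A) +%R.
Proof.
move=> f g h; apply: funext => x; rewrite evD !smulE -big_split; apply: eq_bigr => d _.
by rewrite /smul_term evD mulrDr.
Qed.

Lemma sone_neq0 : (@sone K n : A) != 0.
Proof.
apply/eqP => /(congr1 (fun f : A => f (mzero n))).
by rewrite /sone eqxx; apply/eqP; exact: oner_neq0.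
Qed.

HB.instance Definition _ :=
  GRing.Zmodule_isNzRing.Build A smulA_fun smul1 smulr1 smulDl smulDr sone_neq0.

Definition sscale (c : K) (f : A) : A := fun x => c * f x.

Lemma sscaleA c d f : sscale c (sscale d f) = sscale (c * d) f.
Proof. by apply: funext => x; rewrite /sscale mulrA. Qed.
Lemma sscale1 : left_id 1 sscale.
Proof. by move=> f; apply: funext => x; rewrite /sscale mul1r. Qed.
Lemma sscaleDr : right_distributive sscale +%R.
Proof. by move=> c f g; apply: funext => x; rewrite /sscale !evD mulrDr. Qed.
Lemma sscaleDl f : {morph sscale^~ f : a b / a + b}.
Proof. by move=> a b; apply: funext => x; rewrite /sscale !evD mulrDl. Qed.

HB.instance Definition _ := GRing.Zmodule_isLmodule.Build K A sscaleA sscale1 sscaleDr sscaleDl.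

Lemma sscaleAl (c : K) (u v : A) : c *: (u * v) = (c *: u) * v.
Proof. exact: (esym (smul_scalel c u v)). Qed.

HB.instance Definition _ := GRing.Lmodule_isLalgebra.Build K A sscaleAl.

Lemma sscaleAr (c : K) (u v : A) : c *: (u * v) = u * (c *: v).
Proof. exact: (esym (smul_scaler c u v)). Qed.

HB.instance Definition _ := GRing.Lalgebra_isAlgebra.Build K A sscaleAr.

Lemma evZ c (f : A) a : (c *: f) a = c * f a. Proof. by []. Qed.
Lemma evM (f g : A) a : (f * g) a = smul f g a. Proof. by []. Qed.
Lemma evsum (I : Type) (r : seq I) (P : pred I) (F : I -> A) a :
  (\sum_(i <- r | P i) F i) a = \sum_(i <- r | P i) F i a.
Proof. exact: (big_morph (fun f : A => f a)). Qed.

End AlgebraStructure.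

Lemma sign_double (R : ringType) x : (-1) ^+ (x + x)%N = 1 :> R.
Proof. by rewrite -signr_odd oddD addbb. Qed.

Section Generators.
Variables (K : fieldType) (n : nat).
Local Notation A := (skewpoly K n).
Local Notation mono := (mono n).

Definition unitm (i : 'I_n) : mono := [ffun j => nat_of_bool (j == i)].
Definition X (i : 'I_n) : A := xgen K i.

Lemma XE i : X i = delta (unitm i).
Proof. by []. Qed.

Lemma deg_unitm i : deg (unitm i) = 1%N.
Proof. by rewrite /deg (bigD1 i) //= ffunE eqxx big1 // => j hj; rewrite ffunE (negbTE hj). Qed.

Lemma mle_unitm (a : mono) i : (0 < a i)%N -> mle (unitm i) a.
Proof. by move=> h; apply/mleP => j; rewrite ffunE; case: eqP => [->|]. Qed.

Lemma sgn_exp_unitm i j : sgn_exp (unitm i) (unitm j) = (j < i)%N.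
Proof.
rewrite /sgn_exp (bigD1 i) //= [X in (_ + X)%N]big1 ?addn0; last first.
  by move=> u hu; rewrite big1 // => v _; rewrite ffunE (negbTE hu).
rewrite ffunE eqxx /=.
case: (ltnP j i) => h.
  rewrite (bigD1 j) //= ffunE eqxx big1 ?addn0 // => v /andP [_ hv].
  by rewrite ffunE (negbTE hv).
by rewrite big1 // => v hv; rewrite ffunE; case: eqP => // e; move: hv; rewrite e ltnNge h.
Qed.

Lemma mulXX i j : X i * X j = (-1) ^+ (j < i)%N *: (delta (madd (unitm i) (unitm j)) : A).
Proof. by apply: funext => a; rewrite evM evZ !XE delta_mul sgn_exp_unitm. Qed.

Lemma X_anticomm i j : i != j -> X i * X j + X j * X i = 0.
Proof.
move=> ne; rewrite !mulXX [madd (unitm j) _]maddC -scalerDl.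
case: (ltngtP i j) => h; first by rewrite expr0 expr1 addrN scale0r.
  by rewrite expr0 expr1 addNr scale0r.
by move: ne; rewrite (val_inj h) eqxx.
Qed.

(* A monomial of even exponents commutes with every monomial, hence x_i^2
   is central. *)
Lemma Xsq_central i (f : A) : X i ^+ 2 * f = f * X i ^+ 2.
Proof.
apply: funext => a; rewrite !evM expr2 mulXX ltnn expr0 scale1r.
rewrite smul_deltal smul_deltar; case: ifP => // _.
by rewrite sgn_exp_addl sgn_exp_addr !sign_double.
Qed.

Lemma delta_peel (a : mono) i : (0 < a i)%N ->
  (delta a : A) = (-1) ^+ sgn_exp (unitm i) (mono_sub a (unitm i)) *:
                    (X i * delta (mono_sub a (unitm i))).
Proof.
move=> hai; apply: funext => x.
rewrite evZ evM XE delta_mul mulrA -exprD sign_double mul1r madd_sub //.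
exact: mle_unitm.
Qed.

End Generators.

Section Fourier.
Variables (K : fieldType) (n : nat) (w : K).
Hypothesis hw : n.-primitive_root w.
Local Notation A := (skewpoly K n).

Lemma n_gt0 : (0 < n)%N. Proof. exact: prim_order_gt0 hw. Qed.

Definition zmodn (k : nat) : 'I_n := Ordinal (ltn_pmod k n_gt0).

Definition b (g : 'I_n) : A := bel w g.

Lemma bE g : b g = (n%:R)^-1 *: \sum_(i < n) w ^+ (i * g) *: X K i.
Proof. by apply: funext => a; rewrite evZ evsum. Qed.

Definition C (j : 'I_n) : A :=
  (2%:R * ((n%:R)^-1 * (n%:R)^-1)) *: \sum_(i < n) w ^+ (i * j) *: X K i ^+ 2.

(* C j is a combination of central squares, hence central. *)
Lemma C_central j (f : A) : C j * f = f * C j.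
Proof.
rewrite /C -scalerAl -scalerAr mulr_suml mulr_sumr; congr (_ *: _).
by apply: eq_bigr => i _; rewrite -scalerAl -scalerAr Xsq_central.
Qed.

Lemma mul_bb k l : b k * b l =
  ((n%:R)^-1 * (n%:R)^-1) *:
    \sum_(i < n) \sum_(i' < n) (w ^+ (i * k) * w ^+ (i' * l)) *: (X K i * X K i').
Proof.
rewrite !bE -scalerAl -scalerAr scalerA mulr_suml; congr (_ *: _).
apply: eq_bigr => i _; rewrite -scalerAl mulr_sumr scaler_sumr; apply: eq_bigr => i' _.
by rewrite -scalerAr scalerA.
Qed.

Lemma w_expD i k l : w ^+ (i * k) * w ^+ (i * l) = w ^+ (i * zmodn (k + l)).
Proof. by rewrite -exprD -mulnDr -(prim_expr_mod hw) -[RHS](prim_expr_mod hw) modnMmr. Qed.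

(* Key identity: the anticommutator of b_k and b_l only depends on k + l;
   the cross terms x_i x_i' (i <> i') cancel by anticommutation. *)
Lemma b_anticomm k l : b k * b l + b l * b k = C (zmodn (k + l)).
Proof.
rewrite !mul_bb -scalerDr /C [X in _ + X]exchange_big /= -big_split /=.
rewrite [2%:R * _]mulrC -[RHS]scalerA; congr (_ *: _).
rewrite scaler_sumr; apply: eq_bigr => i _.
rewrite -big_split /= (bigD1 i) //= big1 ?addr0.
  rewrite [w ^+ (i * l) * _]mulrC w_expD -scalerDr -mulr2n -scaler_nat !scalerA.
  by rewrite expr2 mulrC.
move=> i' hi'; rewrite [w ^+ (i' * l) * _]mulrC -scalerDr.
by rewrite X_anticomm ?scaler0 // eq_sym.
Qed.

Lemma zmodn_zsub (j k : 'I_n) : zmodn (k + zsub j k) = j.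
Proof.
apply: val_inj; rewrite /= modnDmr addnBA; last by rewrite (leq_trans (ltnW (ltn_ord k))) // leq_addl.
by rewrite addnC addnK modnDr modn_small.
Qed.

Lemma celE (j k : 'I_n) : cel w j k = C j.
Proof. by have := b_anticomm k (zsub j k); rewrite zmodn_zsub. Qed.

Lemma b_sq (u : 'I_n) : (2%:R : K) != 0 -> b u * b u = 2%:R^-1 *: C (zmodn (u + u)).
Proof.
move=> h2; rewrite -b_anticomm -mulr2n -scaler_nat scalerA mulVf ?scale1r //.
Qed.

Lemma w_neq0 : w != 0.
Proof.
apply/eqP => w0; have := prim_expr_order hw; rewrite w0 expr0n.
by case: n (prim_order_gt0 hw) => // k _ /eqP; rewrite eq_sym oner_eq0.
Qed.

Lemma char_orthogonal (i i' : 'I_n) :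
  \sum_(g < n) (w ^+ (i * g))^-1 * w ^+ (i' * g) = if i == i' then n%:R else 0.
Proof.
have wi0 : w ^+ i != 0 by rewrite expf_neq0 // w_neq0.
set z := w ^+ i' / w ^+ i.
have hz g : (w ^+ (i * g))^-1 * w ^+ (i' * g) = z ^+ g.
  by rewrite /z exprMn exprVn -!exprM mulrC.
under eq_bigr do rewrite hz.
have [e|ne] := eqVneq i i'.
  rewrite /z -e divff // (eq_bigr (fun _ => 1)) => [|g _]; last by rewrite expr1n.
  by rewrite sumr_const card_ord.
have z1 : z - 1 != 0.
  rewrite subr_eq0; apply/eqP => z1; move: ne; rewrite eq_sym => /negP; apply.
  have : w ^+ i' = w ^+ i by rewrite -(divfK wi0 (w ^+ i')) -/z z1 mul1r.
  by move/eqP; rewrite (eq_prim_root_expr hw) !modn_small.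
have zn : z ^+ n = 1.
  by rewrite /z exprMn exprVn -!exprM !(mulnC _ n) !exprM (prim_expr_order hw) !expr1n invr1 mulr1.
have := subrX1 z n; rewrite zn subrr => /esym/eqP; rewrite mulf_eq0 (negbTE z1) /=.
by move/eqP.
Qed.

Lemma X_fourier (i : 'I_n) : (n%:R : K) != 0 ->
  X K i = \sum_(g < n) (w ^+ (i * g))^-1 *: b g.
Proof.
move=> hn.
under eq_bigr do rewrite bE scalerA [_ * n%:R^-1]mulrC -scalerA scaler_sumr.
rewrite -scaler_sumr exchange_big /=.
under eq_bigr do (under eq_bigr do rewrite scalerA; rewrite -scaler_suml char_orthogonal).
rewrite (bigD1 i) //= eqxx big1 ?addr0 ?scalerA ?mulVf ?scale1r // => j hj.
by rewrite eq_sym (negbTE hj) scale0r.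
Qed.

End Fourier.

Section Grading.
Variables (K : fieldType) (n : nat).
Local Notation A := (skewpoly K n).

Lemma homog_mul r s (f g : A) : homog r f -> homog s g -> homog (r + s) (f * g).
Proof.
move=> hf hg a ha; rewrite evM smulE big1 // => d hd; rewrite /smul_term.
set x := ord_to_mono d.
have hx : mle x a by rewrite -mle_ord_to_mono.
have [e|ne] := eqVneq (deg x) r; last by rewrite hf ?mulr0 ?mul0r.
rewrite hg ?mulr0 //; apply: contra ha => /eqP e2.
by rewrite -(madd_sub hx) deg_madd e e2.
Qed.

Lemma homog_add r (f g : A) : homog r f -> homog r g -> homog r (f + g).
Proof. by move=> hf hg a ha; rewrite evD hf ?hg ?addr0. Qed.

Lemma homog_scale r c (f : A) : homog r f -> homog r (c *: f).
Proof. by move=> hf a ha; rewrite evZ hf ?mulr0. Qed.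

Lemma homog_sum (I : Type) r (s : seq I) (P : pred I) (F : I -> A) :
  (forall i, P i -> homog r (F i)) -> homog r (\sum_(i <- s | P i) F i).
Proof.
move=> h; elim/big_rec: _ => [|i x Pi hx]; first by [].
by apply: homog_add => //; apply: h.
Qed.

Lemma homog1 : homog 0 (1 : A).
Proof.
move=> a ha; change ((delta (mzero n) : A) a = 0); rewrite /delta.
by case: eqP => // e; move: ha; rewrite e /deg big1 // => i _; rewrite ffunE.
Qed.

Lemma homog_prod (I : Type) (s : seq I) (d : I -> nat) (F : I -> A) :
  (forall i, homog (d i) (F i)) -> homog (\sum_(i <- s) d i) (\prod_(i <- s) F i).
Proof.
move=> h; elim: s => [|i s IH]; first by rewrite !big_nil; exact: homog1.
by rewrite !big_cons; apply: homog_mul.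
Qed.

Lemma homog_exp r k (f : A) : homog r f -> homog (k * r) (f ^+ k).
Proof.
move=> hf; elim: k => [|k IH]; first by rewrite mul0n expr0; exact: homog1.
by rewrite exprS mulSn; apply: homog_mul.
Qed.

Lemma homogX i : homog 1 (X K i : A).
Proof. by move=> a ha; rewrite XE /delta; case: eqP => // e; move: ha; rewrite e deg_unitm. Qed.

End Grading.

Section NormalForm.
Variables (K : fieldType) (n : nat) (w : K).
Hypothesis hw : n.-primitive_root w.
Local Notation A := (skewpoly K n).
Local Notation b := (b w).
Local Notation C := (C w).
Local Notation zmodn := (zmodn hw).

Definition bvec := {ffun 'I_n -> bool}.
Definition cvec := {ffun 'I_n -> nat}.

Definition bmono (l : seq 'I_n) (e : bvec) : A := \prod_(s <- l) b s ^+ e s.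
Definition cmono (J : cvec) : A := \prod_(s <- enum 'I_n) C s ^+ J s.
Definition nfmono l e J : A := bmono l e * cmono J.

Definition in_span l (x : A) :=
  exists s : seq (K * (bvec * cvec)), x = \sum_(p <- s) p.1 *: nfmono l p.2.1 p.2.2.

Definition unitJ (m : 'I_n) : cvec := [ffun s => nat_of_bool (s == m)].
Definition setE (e : bvec) u v : bvec := [ffun x => if x == u then v else e x].

(* The C's are central, so products of their powers multiply exponentwise. *)
Lemma C_comm j (x : A) : GRing.comm (C j) x.
Proof. by rewrite /GRing.comm C_central. Qed.

Lemma cmono_unit m : cmono (unitJ m) = C m.
Proof.
rewrite /cmono (eq_bigr (fun s => if s == m then C s else 1)); last first.
  by move=> s _; rewrite ffunE; case: eqP.
by rewrite -big_mkcond -big_filter filter_pred1_uniq ?enum_uniq ?mem_enum // big_seq1.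
Qed.

Lemma cmonoD J J' : cmono J * cmono J' = cmono [ffun s => (J s + J' s)%N].
Proof.
rewrite /cmono -prodrM_comm; last by move=> i j _ _; apply/commrX/commr_sym/commrX/C_comm.
by apply: eq_bigr => s _; rewrite ffunE exprD.
Qed.

Lemma cmono0 : cmono [ffun => 0%N] = 1.
Proof. by rewrite /cmono big1 // => s _; rewrite ffunE expr0. Qed.

Lemma in_span0 l : in_span l 0.
Proof. by exists [::]; rewrite big_nil. Qed.

Lemma in_spanD l x y : in_span l x -> in_span l y -> in_span l (x + y).
Proof. by move=> [s ->] [t ->]; exists (s ++ t); rewrite big_cat. Qed.

Lemma in_spanZ l c x : in_span l x -> in_span l (c *: x).
Proof.
move=> [s ->]; exists (map (fun p => (c * p.1, p.2)) s).
by rewrite big_map scaler_sumr; apply: eq_bigr => p _; rewrite scalerA.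
Qed.

Lemma in_spanB l x y : in_span l x -> in_span l y -> in_span l (x - y).
Proof. by move=> hx hy; rewrite -scaleN1r; apply: in_spanD => //; exact: in_spanZ. Qed.

Lemma in_span_sum l (I : Type) (r : seq I) (P : pred I) (F : I -> A) :
  (forall i, P i -> in_span l (F i)) -> in_span l (\sum_(i <- r | P i) F i).
Proof. by move=> h; apply: big_ind => //; [exact: in_span0 | exact: in_spanD]. Qed.

Lemma in_span_nf l e J : in_span l (nfmono l e J).
Proof. by exists [:: (1, (e, J))]; rewrite big_seq1 scale1r. Qed.

Lemma in_span_bm l e : in_span l (bmono l e).
Proof. by rewrite -[bmono l e]mulr1 -cmono0; exact: in_span_nf. Qed.

Lemma in_span_mulC l x J : in_span l x -> in_span l (x * cmono J).
Proof.
move=> [s ->]; rewrite mulr_suml; apply: in_span_sum => p _.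
by rewrite -scalerAl -mulrA cmonoD; apply: in_spanZ; exact: in_span_nf.
Qed.

Lemma bmono_cons (u : 'I_n) l e (v : bool) : u \notin l ->
  bmono (u :: l) (setE e u v) = b u ^+ v * bmono l e.
Proof.
move=> hu; rewrite /bmono big_cons ffunE eqxx; congr (_ * _).
apply: eq_big_seq => s hs; rewrite ffunE; case: eqP => // e'.
by move: hu; rewrite -e' hs.
Qed.

Lemma in_span_cons (u : 'I_n) l x (v : bool) : u \notin l ->
  in_span l x -> in_span (u :: l) (b u ^+ v * x).
Proof.
move=> hu [s ->]; rewrite mulr_sumr; apply: in_span_sum => p _.
rewrite -scalerAr mulrA -bmono_cons //; apply: in_spanZ; exact: in_span_nf.
Qed.

(* Normal ordering: multiplying an ordered monomial on the left by b_s stays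
   in the span; b_s is moved to its place using b_s b_u = C - b_u b_s and
   b_s^2 = C / 2. *)
Lemma in_span_bmono l : uniq l -> (2%:R : K) != 0 ->
  forall s e, s \in l -> in_span l (b s * bmono l e).
Proof.
move=> + h2; elim: l => [|u l IH] // /andP [hu hl] s e hsl.
have -> : bmono (u :: l) e = b u ^+ e u * bmono l e by rewrite /bmono big_cons.
have [->|nsu] := eqVneq s u.
  case: (e u); last by rewrite expr0 mul1r -[b u]expr1 -(bmono_cons e true hu); exact: in_span_bm.
  rewrite expr1 mulrA b_sq // -scalerAl C_central.
  rewrite -[bmono l e]mul1r -(expr0 (b u)) -(bmono_cons e false hu) -cmono_unit.
  by apply: in_spanZ; exact: in_span_nf.
have hsl' : s \in l by move: hsl; rewrite in_cons (negbTE nsu).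
case: (e u); last first.
  rewrite expr0 mul1r -[b s * _]mul1r -(expr0 (b u)).
  by apply: (in_span_cons false) => //; exact: IH.
rewrite expr1 mulrA.
have -> : b s * b u = C (zmodn (s + u)) - b u * b s by rewrite -b_anticomm addrK.
rewrite mulrBl -mulrA; apply: in_spanB.
  rewrite C_central -cmono_unit -[bmono l e]mul1r -(expr0 (b u)) -(bmono_cons e false hu).
  exact: in_span_nf.
by rewrite -[b u]expr1; apply: (in_span_cons true) => //; exact: IH.
Qed.

End NormalForm.

Section IndexBijection.
Variables (n r : nat).
Local Notation mono := (mono n).

(* The index (i, j) of B_r corresponds to the exponent vector i + 2 j, and
   this is a bijection onto the monomials of degree r (parity and half). *)
Definition mono_of (t : bidx n r) : mono := [ffun s => (t.1 s + 2 * t.2 s)%N].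
Definition idx_of (a : mono) : bidx n r :=
  ([ffun s => odd (a s)], [ffun s => inord (a s)./2]).

Lemma bvalidE t : bvalid t = (deg (mono_of t) == r).
Proof.
rewrite /bvalid /deg big_distrr /= -big_split /=.
by congr (_ == r); apply: eq_bigr => s _; rewrite ffunE.
Qed.

Lemma mono_ofK t : idx_of (mono_of t) = t.
Proof.
case: t => e J; rewrite /idx_of /=; congr (_, _); apply/ffunP => s; rewrite !ffunE.
  by rewrite oddD oddM /= addbF; case: (e s).
by apply: val_inj; rewrite /= mul2n half_bit_double inord_val.
Qed.

Lemma idx_ofK a : deg a = r -> mono_of (idx_of a) = a.
Proof.
move=> ha; apply/ffunP => s; rewrite !ffunE inordK ?mul2n ?odd_double_half //.
by rewrite ltnS leq_half_double -ha (leq_trans (le_deg a s)) // -addnn leqW // leq_addr.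
Qed.

Lemma idx_of_valid a : deg a = r -> bvalid (idx_of a).
Proof. by move=> ha; rewrite bvalidE idx_ofK ?ha. Qed.

End IndexBijection.

Section Spanning.
Variables (K : fieldType) (n : nat) (w : K).
Hypothesis hw : n.-primitive_root w.
Hypothesis h2 : (2%:R : K) != 0.
Hypothesis hn : (n%:R : K) != 0.
Local Notation A := (skewpoly K n).
Local Notation E := (enum 'I_n).
Local Notation in_span := (in_span w E).

Lemma in_span_mulb s (x : A) : in_span x -> in_span (b w s * x).
Proof.
move=> [l ->]; rewrite mulr_sumr; apply: in_span_sum => p _.
rewrite -scalerAr mulrA; apply: in_spanZ; apply: in_span_mulC.
by apply: in_span_bmono; rewrite ?enum_uniq ?mem_enum.
Qed.

Lemma in_span_mulX i (x : A) : in_span x -> in_span (X K i * x).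
Proof.
move=> hx; rewrite (X_fourier hw i hn) mulr_suml; apply: in_span_sum => g _.
by rewrite -scalerAl; apply: in_spanZ; apply: in_span_mulb.
Qed.

Lemma in_span_delta (a : mono n) : in_span (delta a : A).
Proof.
elim: {a}(deg a) {-2}a (erefl (deg a)) => [|k IH] a ha.
  have -> : (delta a : A) = bmono w E [ffun => false].
    by rewrite (deg_eq0 ha) /bmono big1 // => s _; rewrite ffunE expr0.
  exact: in_span_bm.
have [i hi] : exists i, (0 < a i)%N.
  case: (pickP (fun i => (0 < a i)%N)) => [i hi|h]; first by exists i.
  by move: ha; rewrite /deg big1 // => s _; move: (h s) => /=; case: (a s).
rewrite (delta_peel K hi); apply: in_spanZ; apply: in_span_mulX; apply: IH.
by apply/eqP; rewrite -eqSS -ha -{2}(madd_sub (mle_unitm hi)) deg_madd deg_unitm.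
Qed.

Lemma homog_expand r (f : A) : homog r f ->
  f = \sum_(t : bidx n r | bvalid t) f (mono_of t) *: (delta (mono_of t) : A).
Proof.
move=> hf; apply: funext => a; rewrite evsum.
have [da|nda] := eqVneq (deg a) r.
  rewrite (bigD1 (idx_of r a)) /=; last exact: idx_of_valid.
  rewrite evZ idx_ofK // /delta eqxx mulr1 big1 ?addr0 // => t /andP [ht ne].
  rewrite evZ /delta; case: eqP => [e|]; last by rewrite mulr0.
  by move: ne; rewrite e mono_ofK eqxx.
rewrite hf // big1 // => t ht; rewrite evZ /delta; case: eqP => [e|]; last by rewrite mulr0.
by move: nda; rewrite e (eqP (etrans (esym (bvalidE t)) ht)) eqxx.
Qed.

Lemma homog_in_span r (f : A) : homog r f -> in_span f.
Proof.
move=> hf; rewrite (homog_expand hf); apply: in_span_sum => t _.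
by apply: in_spanZ; exact: in_span_delta.
Qed.

End Spanning.

Lemma mulmx_onto_inj (K : fieldType) (N : nat) (M : 'M[K]_N) :
  (forall v : 'rV_N, exists u, u *m M = v) -> forall u : 'rV_N, u *m M = 0 -> u = 0.
Proof.
move=> onto u /eqP; rewrite mulmx_free_eq0 => [/eqP //|].
rewrite row_free_unit -row_full_unit; apply/row_fullP.
have [U hU] := fin_all_exists (fun i : 'I_N => onto (row i 1%:M)).
by exists (\matrix_i U i); apply/row_matrixP => i; rewrite row_mul rowK hU.
Qed.

Section Basis.
Variables (K : fieldType) (n : nat) (w : K).
Hypothesis hw : n.-primitive_root w.
Local Notation A := (skewpoly K n).
Local Notation E := (enum 'I_n).

Lemma spowE (f : A) k : spow f k = f ^+ k.
Proof. by elim: k => [|k IH] //=; rewrite exprS -IH. Qed.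

Lemma oprodE (f : 'I_n -> A) (e : 'I_n -> nat) : oprod f e = \prod_(s <- E) f s ^+ e s.
Proof. by rewrite unlock /oprod; elim: E => [|s l IH] //=; rewrite -IH spowE. Qed.

Definition cvec_of r (t : bidx n r) : cvec n := [ffun s => nat_of_ord (t.2 s)].

Lemma beltE r (t : bidx n r) : (belt w t : A) = nfmono w E t.1 (cvec_of t).
Proof.
rewrite /belt /nfmono /bmono /cmono -!oprodE; congr (_ * _).
have -> : cj w = C w :> ('I_n -> A) by apply: funext => j; rewrite /cj celE.
by congr oprod; apply: funext => s; rewrite ffunE.
Qed.

(* The degree of a normal monomial: one per b, two per C. *)
Definition nfdeg (e : bvec n) (J : cvec n) := (\sum_(s < n) e s + 2 * \sum_(s < n) J s)%N.

Lemma homog_nfmono e J : homog (nfdeg e J) (nfmono w E e J).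
Proof.
have homog_b s : homog 1 (b w s : A).
  by rewrite bE; apply/homog_scale/homog_sum => i _; apply/homog_scale/homogX.
have homog_C s : homog 2 (C w s : A).
  rewrite /C; apply/homog_scale/homog_sum => i _; apply: homog_scale.
  by rewrite expr2; apply: (homog_mul (homogX _ _) (homogX _ _)).
have -> : nfdeg e J = (\sum_(s <- E) (e s * 1) + \sum_(s <- E) (J s * 2))%N.
  rewrite /nfdeg big_distrr /= !big_enum /=.
  by congr (_ + _); apply: eq_bigr => s _; rewrite ?muln1 // mulnC.
by apply: homog_mul; apply: homog_prod => s; exact: homog_exp.
Qed.

Lemma bvalid_nfdeg r (t : bidx n r) : bvalid t = (nfdeg t.1 (cvec_of t) == r).
Proof. by rewrite /bvalid /nfdeg; congr (_ + 2 * _ == r)%N; apply: eq_bigr => s _; rewrite ffunE. Qed.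

Lemma homog_belt r (t : bidx n r) : bvalid t -> homog r (belt w t).
Proof. by rewrite bvalid_nfdeg beltE => /eqP h; rewrite -[X in homog X _]h; exact: homog_nfmono. Qed.

Hypothesis h2 : (2%:R : K) != 0.
Hypothesis hn : (n%:R : K) != 0.

Definition idx_of_nf r (e : bvec n) (J : cvec n) : bidx n r := (e, [ffun u => inord (J u)]).

Lemma idx_of_nfK r e J : nfdeg e J = r ->
  bvalid (idx_of_nf r e J) /\ (belt w (idx_of_nf r e J) : A) = nfmono w E e J.
Proof.
move=> hd; have hJ u : (J u <= r)%N.
  rewrite -hd /nfdeg (leq_trans _ (leq_addl _ _)) // (leq_trans _ (leq_pmull _ _)) //.
  by rewrite (bigD1 u) //= leq_addr.
have eJ : cvec_of (idx_of_nf r e J) = J by apply/ffunP => u; rewrite !ffunE inordK // ltnS.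
by rewrite bvalid_nfdeg beltE eJ hd eqxx.
Qed.

(* B_r spans A_r: collect the degree-r part of a normal-form expansion. *)
Lemma B_spans r (f : ser K n) : homog r f ->
  exists lam : bidx n r -> K, forall a, f a = \sum_(t : bidx n r | bvalid t) lam t * belt w t a.
Proof.
move=> hf; have [s es] := homog_in_span hw h2 hn hf.
exists (fun t => \sum_(p <- s | (nfdeg p.2.1 p.2.2 == r) && (idx_of_nf r p.2.1 p.2.2 == t)) p.1).
move=> a; have [da|nda] := eqVneq (deg a) r; last first.
  by rewrite hf // big1 // => t ht; rewrite homog_belt ?mulr0.
under [RHS]eq_bigr do rewrite mulr_suml big_mkcond /=.
rewrite es evsum exchange_big /=; apply: eq_bigr => p _; rewrite evZ.
have [hd|hd] := eqVneq (nfdeg p.2.1 p.2.2) r; last first.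
  have -> : nfmono w E p.2.1 p.2.2 a = 0 by apply: homog_nfmono; rewrite da eq_sym.
  by rewrite mulr0 big1.
have [valid_t belt_t] := idx_of_nfK hd.
rewrite (bigD1 (idx_of_nf r p.2.1 p.2.2)) //= eqxx belt_t big1 ?addr0 // => t /andP [_ ht].
by rewrite eq_sym (negbTE ht).
Qed.

(* B_r is free: its coordinate matrix against the monomials x^(i + 2j),
   (t, t') valid, is square and onto by B_spans, hence injective. *)
Lemma B_free r (lam : bidx n r -> K) :
  (forall a, \sum_(t : bidx n r | bvalid t) lam t * belt w t a = 0) ->
  forall t : bidx n r, bvalid t -> lam t = 0.
Proof.
move=> hl t0 ht0.
pose V := [pred t : bidx n r | bvalid t].
pose ev (i : 'I_#|V|) : bidx n r := enum_val i.
have sumV (F : bidx n r -> K) : \sum_(t | bvalid t) F t = \sum_(i < #|V|) F (ev i).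
  by rewrite -big_enum_val; apply: eq_bigl => t; rewrite inE.
pose M : 'M[K]_#|V| := \matrix_(i, j) belt w (ev i) (mono_of (ev j)).
have coordM (lm : bidx n r -> K) j :
    ((\row_i lm (ev i)) *m M) 0 j = \sum_(t | bvalid t) lm t * belt w t (mono_of (ev j)).
  by rewrite !mxE sumV; apply: eq_bigr => i _; rewrite !mxE.
have onto (v : 'rV_#|V|) : exists u, u *m M = v.
  pose f : ser K n := fun a => if deg a == r then v 0 (enum_rank_in ht0 (idx_of r a)) else 0.
  have hf : homog r f by move=> a ha; rewrite /f (negbTE ha).
  have [lm hlm] := B_spans hf.
  exists (\row_i lm (ev i)); apply/rowP => j; rewrite coordM -hlm /f.
  have /eqP -> : deg (mono_of (ev j)) == r by rewrite -bvalidE; exact: (enum_valP j).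
  by rewrite eqxx mono_ofK enum_valK_in.
have /rowP /(_ (enum_rank_in ht0 t0)) : \row_i lam (ev i) = 0.
  by apply: (mulmx_onto_inj onto); apply/rowP => j; rewrite coordM hl mxE.
by rewrite !mxE /ev enum_rankK_in.
Qed.

End Basis.

Theorem proposition1p2 (K : closedFieldType) (hK : [pchar K] =i pred0)
  (n : nat) (hn : (2 <= n)%N) (w : K) (hw : n.-primitive_root w) :
  (* c_j is independent of k *)
  (forall j k k' : 'I_n, cel w j k =1 cel w j k') /\
  (* c_j is central in A *)
  (forall (j : 'I_n) (f : ser K n), is_elt f ->
     smul (cj w j) f =1 smul f (cj w j)) /\
  (* B_r is a K-basis of A_r *)
  (forall r : nat,
     (forall t : bidx n r, bvalid t -> homog r (belt w t)) /\
     (forall f : ser K n, homog r f ->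
        exists lam : bidx n r -> K,
          forall a, f a = \sum_(t : bidx n r | bvalid t) lam t * belt w t a) /\
     (forall lam : bidx n r -> K,
        (forall a, \sum_(t : bidx n r | bvalid t) lam t * belt w t a = 0) ->
        forall t : bidx n r, bvalid t -> lam t = 0)).
Proof.
have natr_neq0 := (pcharf0P K).1 hK.
have h2 : (2%:R : K) != 0 by rewrite natr_neq0.
have hn' : (n%:R : K) != 0 by rewrite natr_neq0 -lt0n (leq_trans _ hn).
split; [|split].
- by move=> j k k' a; rewrite (celE hw j k) (celE hw j k').
- move=> j f _ a; rewrite /cj (celE hw j j).
  change ((C w j * (f : skewpoly K n)) a = ((f : skewpoly K n) * C w j) a).
  by rewrite C_central.
- move=> r; split; [|split].
  + exact: homog_belt.
  + exact: B_spans.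
  + exact: B_free.
Qed.
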